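(* For $\vec S_n(\tau),\bar{\vec S}_n(\tau)\in\mathbb{C}^m$, $v_n(\tau)\in\mathbb{C}$ ($n\in\mathbb{Z}$), write $Q_n:=\langle\vec S_{n+1},\bar{\vec S}_n\rangle+\langle\vec S_n,\bar{\vec S}_{n+1}\rangle$. Consider the spatial linear problem for a scalar $\psi_n$ and vectors $\vec\phi_n,\vec\chi_n\in\mathbb{C}^m$ with constant spectral parameter $\lambda$: \begin{align*} v_n(\psi_{n+1}+\psi_{n-1})&=\lambda\psi_n-\langle\vec S_n,\vec\phi_n\rangle-\langle\vec\chi_n,\bar{\vec S}_n\rangle,\\ \vec\phi_{n+1}-\vec\phi_n&=\tfrac{\mathrm{i}}{2}\bar{\vec S}_n(\psi_{n+1}+\psi_{n-1}),\\ \vec\chi_{n+1}+\vec\chi_n&=\tfrac{\mathrm{i}}{2}\vec S_n(\psi_{n+1}+\psi_{n-1}), \end{align*} together with the time evolution \begin{align*} \psi_{n,\tau}={}&v_nv_{n+1}(\psi_{n+2}+\psi_n)-v_nv_{n-1}(\psi_n+\psi_{n-2})+\tfrac{\mathrm{i}}{2}v_n(Q_n+Q_{n-1})(\psi_{n+1}+\psi_{n-1}),\\ \vec\phi_{n,\tau}={}&\tfrac{\mathrm{i}}{2}v_nv_{n+1}\bar{\vec S}_{n-1}(\psi_{n+2}+\psi_n)+\tfrac{\mathrm{i}}{2}v_nv_{n-1}\bar{\vec S}_{n-2}(\psi_{n+1}+\psi_{n-1})\\ &+\tfrac{\mathrm{i}}{2}v_nv_{n-1}\bar{\vec S}_{n+1}(\psi_n+\psi_{n-2})+\tfrac{\mathrm{i}}{2}v_{n-1}v_{n-2}\bar{\vec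 S}_n(\psi_{n-1}+\psi_{n-3})\\ &-\tfrac14 v_n(Q_n+Q_{n-1})\bar{\vec S}_{n-1}(\psi_{n+1}+\psi_{n-1})+\tfrac14 v_{n-1}(Q_{n-1}+Q_{n-2})\bar{\vec S}_n(\psi_n+\psi_{n-2}),\\ \vec\chi_{n,\tau}={}&\tfrac{\mathrm{i}}{2}v_nv_{n+1}\vec S_{n-1}(\psi_{n+2}+\psi_n)-\tfrac{\mathrm{i}}{2}v_nv_{n-1}\vec S_{n-2}(\psi_{n+1}+\psi_{n-1})\\ &+\tfrac{\mathrm{i}}{2}v_nv_{n-1}\vec S_{n+1}(\psi_n+\psi_{n-2})-\tfrac{\mathrm{i}}{2}v_{n-1}v_{n-2}\vec S_n(\psi_{n-1}+\psi_{n-3})\\ &-\tfrac14 v_n(Q_n+Q_{n-1})\vec S_{n-1}(\psi_{n+1}+\psi_{n-1})-\tfrac14 v_{n-1}(Q_{n-1}+Q_{n-2})\vec S_n(\psi_n+\psi_{n-2}). \end{align*} Then the compatibility condition of these overdetermined linear equations (identically in $\psi_n,\vec\phi_n,\vec\chi_n$, after eliminating $\tau$-derivatives and $\lambda$) is equivalent to the system \begin{align*} \vec S_{n,\tau}={}&v_nv_{n+1}(\vec S_{n+2}+\vec S_n)-v_nv_{n-1}(\vec S_n+\vec S_{n-2})+\tfrac{\mathrm{i}}{2}v_n(Q_n+Q_{n-1})(\vec S_{n+1}+\vec S_{n-1}),\\ \bar{\vec S}_{n,\tau}={}&v_nv_{n+1}(\bar{\vec S}_{n+2}+\bar{\vec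 S}_n)-v_nv_{n-1}(\bar{\vec S}_n+\bar{\vec S}_{n-2})-\tfrac{\mathrm{i}}{2}v_n(Q_n+Q_{n-1})(\bar{\vec S}_{n+1}+\bar{\vec S}_{n-1}),\\ v_{n,\tau}={}&2v_n^2(v_{n+1}-v_{n-1})+\tfrac{\mathrm{i}}{2}v_nv_{n+1}\big(\langle\vec S_{n+2},\bar{\vec S}_n\rangle-\langle\vec S_n,\bar{\vec S}_{n+2}\rangle\big)\\ &-\tfrac{\mathrm{i}}{2}v_nv_{n-1}\big(\langle\vec S_n,\bar{\vec S}_{n-2}\rangle-\langle\vec S_{n-2},\bar{\vec S}_n\rangle\big)-\tfrac14 v_n(Q_n+Q_{n-1})(Q_n-Q_{n-1}). \end{align*}
   Context: $n\in\mathbb{Z}$ is the lattice site, $\tau$ a time variable, subscript $\tau$ denotes $\partial/\partial\tau$. $\langle\vec a,\vec b\rangle=\sum_{i=1}^m a^{(i)}b^{(i)}$ is the standard bilinear scalar product (no complex conjugation). The product of a scalar and a column vector is written in either order. $\bar{\vec S}_n$ is an independent vector variable. *)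

(* Complex numbers: an arbitrary numClosedFieldType C
   (e.g. algC, or any model of the complex numbers), with imaginary unit 'i. *)
From HB Require Import structures.
From mathcomp Require Import all_boot all_order all_algebra.
Set Implicit Arguments. Unset Strict Implicit. Unset Printing Implicit Defensive.
Import Order.TTheory GRing.Theory Num.Theory.
Local Open Scope ring_scope.

Section Lax.
Variables (C : numClosedFieldType) (m : nat).
Notation vec := 'rV[C]_m.

Definition bdot (a b : vec) : C := \sum_(k < m) a 0 k * b 0 k.

Definition Qf (S Sb : int -> vec) (n : int) : C :=
  bdot (S (n + 1)) (Sb n) + bdot (S n) (Sb (n + 1)).

Definition spatial (lam : C) (v : int -> C) (S Sb : int -> vec)
    (psi : int -> C) (phi chi : int -> vec) : Prop :=
  forall n : int,
    [/\ v n * (psi (n + 1) + psi (n - 1))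
          = lam * psi n - bdot (S n) (phi n) - bdot (chi n) (Sb n),
        phi (n + 1) - phi n = ('i / 2 * (psi (n + 1) + psi (n - 1))) *: Sb n
      & chi (n + 1) + chi n = ('i / 2 * (psi (n + 1) + psi (n - 1))) *: S n].

Definition psi_t (v : int -> C) (S Sb : int -> vec) (psi : int -> C) (n : int) : C :=
  v n * v (n + 1) * (psi (n + 2) + psi n)
  - v n * v (n - 1) * (psi n + psi (n - 2))
  + 'i / 2 * v n * (Qf S Sb n + Qf S Sb (n - 1)) * (psi (n + 1) + psi (n - 1)).

Definition phi_t (v : int -> C) (S Sb : int -> vec) (psi : int -> C) (n : int) : vec :=
  ('i / 2 * v n * v (n + 1) * (psi (n + 2) + psi n)) *: Sb (n - 1)
  + ('i / 2 * v n * v (n - 1) * (psi (n + 1) + psi (n - 1))) *: Sb (n - 2)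
  + ('i / 2 * v n * v (n - 1) * (psi n + psi (n - 2))) *: Sb (n + 1)
  + ('i / 2 * v (n - 1) * v (n - 2) * (psi (n - 1) + psi (n - 3))) *: Sb n
  - (4^-1 * v n * (Qf S Sb n + Qf S Sb (n - 1)) * (psi (n + 1) + psi (n - 1))) *: Sb (n - 1)
  + (4^-1 * v (n - 1) * (Qf S Sb (n - 1) + Qf S Sb (n - 2)) * (psi n + psi (n - 2))) *: Sb n.

Definition chi_t (v : int -> C) (S Sb : int -> vec) (psi : int -> C) (n : int) : vec :=
  ('i / 2 * v n * v (n + 1) * (psi (n + 2) + psi n)) *: S (n - 1)
  - ('i / 2 * v n * v (n - 1) * (psi (n + 1) + psi (n - 1))) *: S (n - 2)
  + ('i / 2 * v n * v (n - 1) * (psi n + psi (n - 2))) *: S (n + 1)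
  - ('i / 2 * v (n - 1) * v (n - 2) * (psi (n - 1) + psi (n - 3))) *: S n
  - (4^-1 * v n * (Qf S Sb n + Qf S Sb (n - 1)) * (psi (n + 1) + psi (n - 1))) *: S (n - 1)
  - (4^-1 * v (n - 1) * (Qf S Sb (n - 1) + Qf S Sb (n - 2)) * (psi n + psi (n - 2))) *: S n.

(* At a fixed time tau, vt, St, Sbt denote the
   tau-derivatives v_{n,tau}, S_{n,tau}, Sbar_{n,tau}.  Differentiating the three
   spatial equations in tau (lam is constant), substituting the time evolution
   psi_t, phi_t, chi_t for the derivatives of psi, phi, chi, the resulting
   expressions must vanish for every lam and every solution (psi, phi, chi) of
   the spatial problem. *)
Definition compatible (v : int -> C) (S Sb : int -> vec)
    (vt : int -> C) (St Sbt : int -> vec) : Prop :=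
  forall (lam : C) (psi : int -> C) (phi chi : int -> vec),
    spatial lam v S Sb psi phi chi ->
    forall n : int,
      [/\ vt n * (psi (n + 1) + psi (n - 1))
            + v n * (psi_t v S Sb psi (n + 1) + psi_t v S Sb psi (n - 1))
          = lam * psi_t v S Sb psi n
            - bdot (St n) (phi n) - bdot (S n) (phi_t v S Sb psi n)
            - bdot (chi_t v S Sb psi n) (Sb n) - bdot (chi n) (Sbt n),
          phi_t v S Sb psi (n + 1) - phi_t v S Sb psi n
          = ('i / 2 * (psi (n + 1) + psi (n - 1))) *: Sbt n
            + ('i / 2 * (psi_t v S Sb psi (n + 1) + psi_t v S Sb psi (n - 1))) *: Sb n
        & chi_t v S Sb psi (n + 1) + chi_t v S Sb psi n
          = ('i / 2 * (psi (n + 1) + psi (n - 1))) *: St n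
            + ('i / 2 * (psi_t v S Sb psi (n + 1) + psi_t v S Sb psi (n - 1))) *: S n].

Definition S_rhs (v : int -> C) (S Sb : int -> vec) (n : int) : vec :=
  (v n * v (n + 1)) *: (S (n + 2) + S n)
  - (v n * v (n - 1)) *: (S n + S (n - 2))
  + ('i / 2 * v n * (Qf S Sb n + Qf S Sb (n - 1))) *: (S (n + 1) + S (n - 1)).

Definition Sb_rhs (v : int -> C) (S Sb : int -> vec) (n : int) : vec :=
  (v n * v (n + 1)) *: (Sb (n + 2) + Sb n)
  - (v n * v (n - 1)) *: (Sb n + Sb (n - 2))
  - ('i / 2 * v n * (Qf S Sb n + Qf S Sb (n - 1))) *: (Sb (n + 1) + Sb (n - 1)).

Definition v_rhs (v : int -> C) (S Sb : int -> vec) (n : int) : C :=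
  2 * v n ^+ 2 * (v (n + 1) - v (n - 1))
  + 'i / 2 * v n * v (n + 1) * (bdot (S (n + 2)) (Sb n) - bdot (S n) (Sb (n + 2)))
  - 'i / 2 * v n * v (n - 1) * (bdot (S n) (Sb (n - 2)) - bdot (S (n - 2)) (Sb n))
  - 4^-1 * v n * (Qf S Sb n + Qf S Sb (n - 1)) * (Qf S Sb n - Qf S Sb (n - 1)).

End Lax.

(* Sufficiency: with S_tau, Sbar_tau, v_tau given by the system, the two
   vector compatibility equations hold identically, and so does the
   scalar one once lambda psi_j (j = n-2, ..., n+2) is eliminated with the first
   spatial equation and phi, chi at n+-1, n+-2 are expressed through phi_n, chi_n.
   Necessity: since v never vanishes, the spatial problem can be solved from
   arbitrary data (psi_{n-1}, psi_n, phi_n, chi_n), forwards and backwards.  With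
   lambda = v_n, psi_n = 1 and phi_n = chi_n = 0 it forces
   psi_{n+1} + psi_{n-1} = 1; comparing the compatibility conditions for this
   solution with the identities, that factor cancels and leaves the system at n. *)

From HB Require Import structures.
From mathcomp Require Import all_boot all_order all_algebra ring.
Set Implicit Arguments.
Unset Strict Implicit.
Unset Printing Implicit Defensive.
Import Order.TTheory GRing.Theory Num.Theory.
Local Open Scope ring_scope.

Lemma int_shiftE (n : int) :
  (n + 1 + 1 = n + 2) * (n + 1 + 2 = n + 3) * (n + 2 + 1 = n + 3)
  * (n + 1 - 1 = n) * (n + 1 - 2 = n - 1) * (n + 1 - 3 = n - 2)
  * (n + 2 - 1 = n + 1) * (n - 1 + 1 = n) * (n - 1 + 2 = n + 1)
  * (n - 1 - 1 = n - 2) * (n - 1 - 2 = n - 3)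
  * (n - 2 + 1 = n - 1) * (n - 2 - 1 = n - 3).
Proof. by do ![split]; ring. Qed.

Section IntRecursion.
Variables (T : Type) (f g : int -> T -> T).
Hypothesis fK : forall z, cancel (g z) (f z).

Lemma int_recursion (n0 : int) (x0 : T) :
  exists s : int -> T, s n0 = x0 /\ forall z, s (z + 1) = f z (s z).
Proof.
pose fix up k := if k is k'.+1 then f (n0 + k'%:Z) (up k') else x0.
pose fix down k := if k is k'.+1 then g (n0 - k'.+1%:Z) (down k') else x0.
exists (fun z => match z - n0 with Posz k => up k | Negz k => down k.+1 end).
rewrite subrr; split=> // z.
have -> : z + 1 - n0 = (z - n0) + 1 by rewrite addrAC.
have {2}-> : z = n0 + (z - n0) by rewrite addrC subrK.
case: (z - n0) => [k | [|k]] /=.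
- by rewrite addn1.
- exact: esym (fK _ _).
- rewrite subn1; exact: esym (fK _ _).
Qed.
End IntRecursion.

Section BilinearDot.
Variables (C : numClosedFieldType) (m : nat).
Implicit Types (a b c : 'rV[C]_m) (x : C).

Lemma bdotDl a b c : bdot (a + b) c = bdot a c + bdot b c.
Proof. by rewrite /bdot -big_split; apply: eq_bigr => k _; rewrite !mxE mulrDl. Qed.

Lemma bdotDr a b c : bdot a (b + c) = bdot a b + bdot a c.
Proof. by rewrite /bdot -big_split; apply: eq_bigr => k _; rewrite !mxE mulrDr. Qed.

Lemma bdotZl x a b : bdot (x *: a) b = x * bdot a b.
Proof. by rewrite /bdot mulr_sumr; apply: eq_bigr => k _; rewrite !mxE mulrA. Qed.

Lemma bdotZr x a b : bdot a (x *: b) = x * bdot a b.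
Proof. by rewrite /bdot mulr_sumr; apply: eq_bigr => k _; rewrite !mxE mulrCA. Qed.

Lemma bdotNl a b : bdot (- a) b = - bdot a b.
Proof. by rewrite -scaleN1r bdotZl mulN1r. Qed.

Lemma bdotNr a b : bdot a (- b) = - bdot a b.
Proof. by rewrite -scaleN1r bdotZr mulN1r. Qed.

Lemma bdot0l b : bdot 0 b = 0.
Proof. by rewrite -(scale0r 0) bdotZl mul0r. Qed.

Lemma bdot0r a : bdot a 0 = 0.
Proof. by rewrite -(scale0r 0) bdotZr mul0r. Qed.

End BilinearDot.

Definition bdotE := (bdotDl, bdotDr, bdotNl, bdotNr, bdotZl, bdotZr).

Section LaxIdentities.
Variables (C : numClosedFieldType) (m : nat).
Variables (v : int -> C) (S Sb : int -> 'rV[C]_m).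
Implicit Types (n : int) (psi : int -> C).

Lemma compat_phi_rhs psi n :
  phi_t v S Sb psi (n + 1) - phi_t v S Sb psi n =
  ('i / 2 * (psi (n + 1) + psi (n - 1))) *: Sb_rhs v S Sb n
  + ('i / 2 * (psi_t v S Sb psi (n + 1) + psi_t v S Sb psi (n - 1))) *: Sb n.
Proof.
rewrite /phi_t /psi_t /Sb_rhs !int_shiftE.
by apply/rowP => j; rewrite !mxE; field: (mulCii C).
Qed.

Lemma compat_chi_rhs psi n :
  chi_t v S Sb psi (n + 1) + chi_t v S Sb psi n =
  ('i / 2 * (psi (n + 1) + psi (n - 1))) *: S_rhs v S Sb n
  + ('i / 2 * (psi_t v S Sb psi (n + 1) + psi_t v S Sb psi (n - 1))) *: S n.
Proof.
rewrite /chi_t /psi_t /S_rhs !int_shiftE.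
by apply/rowP => j; rewrite !mxE; field: (mulCii C).
Qed.

Section SpatialSolution.
Variables (lam : C) (psi : int -> C) (phi chi : int -> 'rV[C]_m).
Hypothesis sp : spatial lam v S Sb psi phi chi.

Lemma spatial_lam_psi n :
  lam * psi n = v n * (psi (n + 1) + psi (n - 1)) + bdot (S n) (phi n) + bdot (chi n) (Sb n).
Proof. by have [-> _ _] := sp n; ring. Qed.

Lemma spatial_phi_succ n :
  phi (n + 1) = phi n + ('i / 2 * (psi (n + 1) + psi (n - 1))) *: Sb n.
Proof. by have [_ <- _] := sp n; rewrite subrKC. Qed.

Lemma spatial_phi_pred n :
  phi (n - 1) = phi n - ('i / 2 * (psi n + psi (n - 2))) *: Sb (n - 1).
Proof. by have [_ + _] := sp (n - 1); rewrite !int_shiftE => <-; rewrite subKr. Qed.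

Lemma spatial_chi_succ n :
  chi (n + 1) = - chi n + ('i / 2 * (psi (n + 1) + psi (n - 1))) *: S n.
Proof. by have [_ _ <-] := sp n; rewrite [RHS]addrC addrK. Qed.

Lemma spatial_chi_pred n :
  chi (n - 1) = - chi n + ('i / 2 * (psi n + psi (n - 2))) *: S (n - 1).
Proof. by have [_ _ +] := sp (n - 1); rewrite !int_shiftE => <-; rewrite addKr. Qed.

Lemma compat_psi_rhs n :
  v_rhs v S Sb n * (psi (n + 1) + psi (n - 1))
    + v n * (psi_t v S Sb psi (n + 1) + psi_t v S Sb psi (n - 1))
  = lam * psi_t v S Sb psi n
    - bdot (S_rhs v S Sb n) (phi n) - bdot (S n) (phi_t v S Sb psi n)
    - bdot (chi_t v S Sb psi n) (Sb n) - bdot (chi n) (Sb_rhs v S Sb n).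
Proof.
have lam_psi_t : lam * psi_t v S Sb psi n =
  v n * v (n + 1) * (lam * psi (n + 2) + lam * psi n)
  - v n * v (n - 1) * (lam * psi n + lam * psi (n - 2))
  + 'i / 2 * v n * (Qf S Sb n + Qf S Sb (n - 1)) * (lam * psi (n + 1) + lam * psi (n - 1)).
  by rewrite /psi_t; ring.
have phi2 := spatial_phi_succ (n + 1); have chi2 := spatial_chi_succ (n + 1).
have phim2 := spatial_phi_pred (n - 1); have chim2 := spatial_chi_pred (n - 1).
rewrite lam_psi_t !spatial_lam_psi.
move: phi2 chi2 phim2 chim2; rewrite !int_shiftE => -> -> -> ->.
rewrite spatial_phi_succ spatial_chi_succ spatial_phi_pred spatial_chi_pred.
rewrite /psi_t /phi_t /chi_t /v_rhs /S_rhs /Sb_rhs /Qf !int_shiftE !bdotE.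
by field: (mulCii C).
Qed.

End SpatialSolution.
End LaxIdentities.

Section SpatialRecursion.
Variables (C : numClosedFieldType) (m : nat).
Variables (lam : C) (v : int -> C) (S Sb : int -> 'rV[C]_m).
Hypothesis v_neq0 : forall n, v n != 0.

(* A state at site n is (psi (n - 1), psi n, phi n, chi n). *)
Local Notation state := (C * C * 'rV[C]_m * 'rV[C]_m)%type.

Definition spatial_succ (n : int) (x : state) : state :=
  let: (a, b, p, c) := x in
  let s := (lam * b - bdot (S n) p - bdot c (Sb n)) / v n in
  (b, s - a, p + ('i / 2 * s) *: Sb n, - c + ('i / 2 * s) *: S n).

(* Solving backwards, the unknown psi_{n+1} + psi_{n-1} also enters phi_n and
   chi_n, but its contributions to <S_n, phi_n> + <chi_n, Sbar_n> cancel, so the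
   first spatial equation at n still determines it explicitly. *)
Definition spatial_pred (n : int) (y : state) : state :=
  let: (b, b', p', c') := y in
  let s := (lam * b - bdot (S n) p' + bdot c' (Sb n)) / v n in
  (s - b', b, p' - ('i / 2 * s) *: Sb n, - c' + ('i / 2 * s) *: S n).

Lemma spatial_predK n : cancel (spatial_pred n) (spatial_succ n).
Proof.
case=> [[[b b'] p'] c'] /=.
set s := (lam * b - bdot (S n) p' + bdot c' (Sb n)) / v n.
have -> : (lam * b - bdot (S n) (p' - ('i / 2 * s) *: Sb n)
           - bdot (- c' + ('i / 2 * s) *: S n) (Sb n)) / v n = s.
  by rewrite [in RHS]/s !bdotE; congr (_ / _); ring.
by rewrite subKr subrK opprD opprK subrK.
Qed.

Lemma spatial_solution_exists (n0 : int) (a b : C) (p c : 'rV[C]_m) :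
  exists psi phi chi, [/\ spatial lam v S Sb psi phi chi,
    psi (n0 - 1) = a, psi n0 = b, phi n0 = p & chi n0 = c].
Proof.
have [s [s0 sS]] := int_recursion spatial_predK n0 (a, b, p, c).
have s_prev n : (s n).1.1.1 = (s (n - 1)).1.1.2.
  by rewrite -[in LHS](subrK 1 n) sS; case: (s (n - 1)) => [[[]]].
exists (fun n => (s n).1.1.2), (fun n => (s n).1.2), (fun n => (s n).2).
split=> [n||||]; rewrite ?s0 -?s_prev ?s0 //.
rewrite sS; case: (s n) => [[[a' b'] p'] c'] /=; rewrite subrK.
split; first by rewrite mulrC divfK.
- by rewrite addrAC subrr add0r.
- by rewrite addrAC addNr add0r.
Qed.

End SpatialRecursion.

Lemma nondegenerate_spatial_solution (C : numClosedFieldType) (m : nat)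
    (v : int -> C) (S Sb : int -> 'rV[C]_m) :
  (forall n, v n != 0) -> forall n : int,
  exists lam psi phi chi, spatial lam v S Sb psi phi chi /\ psi (n + 1) + psi (n - 1) = 1.
Proof.
move=> v_neq0 n.
have [psi [phi [chi [sp _ psi_0 phi_0 chi_0]]]] :=
  spatial_solution_exists (v n) S Sb v_neq0 n 0 1 0 0.
exists (v n), psi, phi, chi; split=> //.
have [e _ _] := sp n; apply: (mulfI (v_neq0 n)).
by rewrite e psi_0 phi_0 chi_0 bdot0l bdot0r !subr0.
Qed.

Theorem proposition2p2 (C : numClosedFieldType) (m : nat)
    (v : int -> C) (S Sb : int -> 'rV[C]_m)
    (vt : int -> C) (St Sbt : int -> 'rV[C]_m) :
  (forall n : int, v n != 0) ->
  (compatible v S Sb vt St Sbt <->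
   (forall n : int,
      [/\ St n = S_rhs v S Sb n, Sbt n = Sb_rhs v S Sb n & vt n = v_rhs v S Sb n])).
Proof.
move=> v_neq0; split=> [compat n | rhs lam psi phi chi sp n]; last first.
  have [-> -> ->] := rhs n.
  by split; [exact: compat_psi_rhs | exact: compat_phi_rhs | exact: compat_chi_rhs].
have [lam [psi [phi [chi [sp X1]]]]] := nondegenerate_spatial_solution S Sb v_neq0 n.
have [c_psi c_phi c_chi] := compat lam psi phi chi sp n.
have i2_neq0 : 'i / 2 * 1 != 0 :> C.
  by rewrite mulr1 mulf_neq0 ?neq0Ci ?invr_eq0 ?pnatr_eq0.
have St_n : St n = S_rhs v S Sb n.
  by move: (compat_chi_rhs v S Sb psi n); rewrite c_chi X1 => /addIr/(scalerI i2_neq0).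
have Sbt_n : Sbt n = Sb_rhs v S Sb n.
  by move: (compat_phi_rhs v S Sb psi n); rewrite c_phi X1 => /addIr/(scalerI i2_neq0).
split=> //; move: c_psi.
by rewrite St_n Sbt_n -(compat_psi_rhs sp n) X1 !mulr1 => /addIr.
Qed.
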